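(* Let $k\ge 1$, let $\pi$ be an input permutation for the $\mathfrak{D}^k\mathfrak{I}$ machine, and let $a<b<c$ be entries of $\pi$. Consider any sequence of legal operations applied to $\pi$, and consider the moment when $b$ is pushed into the increasing stack $I$. If at that moment any of the following holds: (1) $c$ is in $D_j$ and $a$ is in $D_l$ for some $l\le j$; (2) $c$ is in $D_j$ for some $j$, and $a$ is still in the input; (3) $c$ and $a$ are both still in the input, with $a$ following $c$ in $\pi$; then this sequence of operations does not produce the identity permutation as output (i.e. $\pi$ is not sorted by it).
   Context: The $\mathfrak{D}^k\mathfrak{I}$ machine consists of $k$ stacks $D_1,\dots,D_k$ (called decreasing stacks) followed in series by a stack $I$ (the increasing stack). The input permutation is read from left to right. At every moment the elements of each $D_i$ must be in decreasing order from top to bottom (the top element is the largest), and the elements of $I$ must be in increasing order from top to bottom (the top element is the smallest). The operations are: $d_0$: push the next element of the input into $D_1$; $d_i$ ($1\le i\le k-1$): pop the top of $D_i$ and push it into $D_{i+1}$; $d_k$: pop the top of $D_k$ and push it into $I$; $d_{k+1}$: pop the top of $I$ and append it to the right of the output. An operation is legal if it does not violate the order restrictions of the stacks; $d_{k+1}$ is considered legal if the popped element is the smallest among the elements not yet output, and also if no other operation is legal. The permutation is sorted by a sequence of operations if all its elements end in the output in increasing order. *)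

From mathcomp Require Import all_boot.
Set Implicit Arguments. Unset Strict Implicit. Unset Printing Implicit Defensive.

(* A configuration: remaining input (next element first), the decreasing
   stacks D_1..D_k (as a list of length k, each stack listed top first),
   the increasing stack I (top first), and the output produced so far
   (left to right). *)
Record mstate := MState {
  inp : seq nat;
  Ds  : seq (seq nat);
  Ist : seq nat;
  out : seq nat }.

(* the stack D_j, for 1 <= j <= k *)
Definition Dstack (s : mstate) (j : nat) : seq nat := nth [::] (Ds s) j.-1.

Definition init_state (k : nat) (pi : seq nat) : mstate :=
  MState pi (nseq k [::]) [::] [::].

Definition push_dec_ok (x : nat) (st : seq nat) : bool :=
  if st is y :: _ then y < x else true.
Definition push_inc_ok (x : nat) (st : seq nat) : bool :=
  if st is y :: _ then x < y else true.

Definition remaining (s : mstate) : seq nat := inp s ++ flatten (Ds s) ++ Ist s.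

(* operations d_0 .. d_k (those that are legal only when they respect the
   stack order); returns None when the operation is not legal *)
Definition basic_move (k : nat) (s : mstate) (o : nat) : option mstate :=
  if o == 0 then
    match inp s with
    | x :: r => if push_dec_ok x (Dstack s 1)
                then Some (MState r (set_nth [::] (Ds s) 0 (x :: Dstack s 1)) (Ist s) (out s))
                else None
    | [::] => None
    end
  else if o < k then
    match Dstack s o with
    | x :: r => if push_dec_ok x (Dstack s o.+1)
                then Some (MState (inp s)
                        (set_nth [::] (set_nth [::] (Ds s) o.-1 r) o (x :: Dstack s o.+1))
                        (Ist s) (out s))
                else None
    | [::] => None
    end
  else if o == k then
    match Dstack s k with
    | x :: r => if push_inc_ok x (Ist s)
                then Some (MState (inp s) (set_nth [::] (Ds s) k.-1 r) (x :: Ist s) (out s))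
                else None
    | [::] => None
    end
  else None.

(* all operations d_0 .. d_{k+1}; d_{k+1} is legal if the popped element is
   the smallest not yet output, or if no other operation is legal *)
Definition move (k : nat) (s : mstate) (o : nat) : option mstate :=
  if o <= k then basic_move k s o
  else if o == k.+1 then
    match Ist s with
    | x :: r =>
        if all (fun y => x <= y) (remaining s)
           || all (fun o' => if basic_move k s o' is None then true else false) (iota 0 k.+1)
        then Some (MState (inp s) (Ds s) r (rcons (out s) x))
        else None
    | [::] => None
    end
  else None.

Fixpoint run (k : nat) (s : mstate) (ops : seq nat) : option mstate :=
  match ops with
  | [::] => Some s
  | o :: ops' => match move k s o with
                 | Some s' => run k s' ops'
                 | None => None
                 end
  end.

From mathcomp Require Import all_boot.
Set Implicit Arguments. Unset Strict Implicit. Unset Printing Implicit Defensive.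

(* Read the decreasing stacks and the input as a single queue, the pipeline:
   D_k from top to bottom, then D_(k-1), ..., then D_1, then the input.  This
   is the order in which elements can reach I.  A legal move either pushes the
   head of the pipeline into I, or pops I into the output, or lets one element
   jump over elements that are all smaller than it (a decreasing stack only
   accepts an element larger than its contents).  Each hypothesis of the
   theorem says that c is ahead of a in the pipeline when b enters I; as a < c,
   this persists while a is in the pipeline.  But c can never be pushed onto I
   while b is there, since c > b, so b is output while a is still in the
   pipeline and the output is not sorted. *)

Lemma mem2_index (T : eqType) (s : seq T) x y :
  y \in s -> index x s <= index y s -> mem2 s x y.
Proof.
move=> ys le_xy; rewrite /mem2 -(nth_index y ys) -(subnKC le_xy) -nth_drop.
by rewrite mem_nth // size_drop ltn_sub2r ?(leq_ltn_trans le_xy) // index_mem.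
Qed.

Lemma mem2_sorted (T : eqType) (r : rel T) s x y : transitive r -> sorted r s ->
  x \in s -> y \in s -> ~~ r y x -> mem2 s x y.
Proof.
move=> r_tr r_s xs ys r'yx; have r_idx := @sorted_ltn_index T r r_tr s r_s y x ys xs.
by apply: mem2_index ys _; rewrite leqNgt; apply: contra r'yx.
Qed.

Lemma mem2_overtake_cons (v w : seq nat) x y z : y < z -> {in v, forall e, e < x} ->
  mem2 (v ++ x :: w) z y -> mem2 (x :: v ++ w) z y.
Proof.
move=> lt_yz lt_vx; rewrite mem2_cons; case: eqP => [<- /mem2r|/eqP ne_xz].
  by rewrite !(inE, mem_cat) orbCA.
have [eq_xy | ne_xy] := eqVneq x y; last first.
  by rewrite (mem2lr_splice (p2 := [:: x])) ?inE 1?eq_sym.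
subst y; have z'v : z \notin v by apply: contraL lt_yz => /lt_vx /ltnW; rewrite leqNgt.
rewrite mem2_cat (mem2lf z'v) (negbTE z'v) mem2_cons (negbTE ne_xz) /=.
by rewrite orbF => zxw; rewrite mem2_cat zxw orbT.
Qed.

Lemma mem2_overtake (u v w : seq nat) x y z : y < z -> {in v, forall e, e < x} ->
  mem2 (u ++ v ++ x :: w) z y -> mem2 (u ++ x :: v ++ w) z y.
Proof.
move=> lt_yz lt_vx; rewrite mem2_cat => zy; rewrite mem2_cat; move: zy.
case/orP=> [/orP[-> // | zy_vxw] | ].
  by rewrite (mem2_overtake_cons lt_yz lt_vx zy_vxw) orbT.
by rewrite !(inE, mem_cat) orbCA => ->; rewrite !orbT.
Qed.

Lemma notin_uniq_cat (T : eqType) (s1 s2 : seq T) x :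
  uniq (s1 ++ s2) -> x \in s1 -> x \notin s2.
Proof.
by rewrite cat_uniq => /and3P[_ /hasPn s2'1 _] x_s1; apply/negP => /s2'1; rewrite x_s1.
Qed.

Lemma perm_cat_cons (T : eqType) x (s1 s2 : seq T) : perm_eq (s1 ++ x :: s2) (x :: s1 ++ s2).
Proof. by rewrite -cat1s perm_catCA. Qed.

Lemma sorted_cat_cons_leq (p r : seq nat) x y :
  sorted leq (p ++ x :: r) -> y \in r -> x <= y.
Proof. by rewrite sorted_cat_cons => /andP[_ /(order_path_min leq_trans)/allP]; apply. Qed.

Lemma set_nth_splice (T : Type) (x0 : T) (A s : seq T) y z :
  set_nth x0 (A ++ y :: s) (size A) z = A ++ z :: s.
Proof. by elim: A => //= a A ->. Qed.

Lemma mem_nth_lt_size (T : eqType) (ss : seq (seq T)) j x :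
  x \in nth [::] ss j -> j < size ss.
Proof. by rewrite ltnNge; apply: contraTN => ge_j; rewrite nth_default. Qed.

Lemma mem_flatten_rev_nth (T : eqType) (ss : seq (seq T)) j x :
  x \in nth [::] ss j -> x \in flatten (rev ss).
Proof.
move=> x_j; apply/flattenP; exists (nth [::] ss j) => //.
by rewrite mem_rev mem_nth // (mem_nth_lt_size x_j).
Qed.

Lemma flatten_rev_cat (T : Type) (ss1 ss2 : seq (seq T)) :
  flatten (rev (ss1 ++ ss2)) = flatten (rev ss2) ++ flatten (rev ss1).
Proof. by rewrite rev_cat flatten_cat. Qed.

Lemma flatten_rev_splice (T : Type) (ss : seq (seq T)) j : j < size ss ->
  flatten (rev ss) =
  flatten (rev (drop j.+1 ss)) ++ nth [::] ss j ++ flatten (rev (take j ss)).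
Proof.
move=> lt_j; rewrite -{1}(cat_take_drop j ss) (drop_nth [::] lt_j).
by rewrite flatten_rev_cat rev_cons flatten_rcons -catA.
Qed.

Lemma mem2_flatten_rev_nth (T : eqType) (ss : seq (seq T)) j x y :
  mem2 (nth [::] ss j) x y -> mem2 (flatten (rev ss)) x y.
Proof.
move=> xy; rewrite (flatten_rev_splice (mem_nth_lt_size (mem2l xy))).
by rewrite mem2_cat [mem2 (_ ++ _) _ _]mem2_cat xy !orbT.
Qed.

Lemma mem2_flatten_rev_lt (T : eqType) (ss : seq (seq T)) i j x y : i < j ->
  x \in nth [::] ss j -> y \in nth [::] ss i -> mem2 (flatten (rev ss)) x y.
Proof.
move=> lt_ij x_j y_i; rewrite (flatten_rev_splice (mem_nth_lt_size x_j)) catA mem2_cat.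
by rewrite (@mem_flatten_rev_nth _ _ i) ?nth_take // mem_cat x_j !orbT.
Qed.

Lemma push_dec_ok_gt x D : sorted gtn D -> push_dec_ok x D -> {in D, forall y, y < x}.
Proof.
case: D => [|z D] //= sorted_zD lt_zx y; rewrite inE => /predU1P[-> //|yD].
by apply: ltn_trans lt_zx; have /allP := order_path_min (rev_trans ltn_trans) sorted_zD; apply.
Qed.

Lemma push_inc_ok_lt x I : sorted ltn I -> push_inc_ok x I -> {in I, forall y, x < y}.
Proof.
case: I => [|z I] //= sorted_zI lt_xz y; rewrite inE => /predU1P[-> //|yI].
by apply: ltn_trans lt_xz _; have /allP := order_path_min ltn_trans sorted_zI; apply.
Qed.

Lemma sorted_push_dec x D : sorted gtn D -> push_dec_ok x D -> sorted gtn (x :: D).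
Proof. by case: D => [|y D] //= -> ->. Qed.

Lemma sorted_push_inc x I : sorted ltn I -> push_inc_ok x I -> sorted ltn (x :: I).
Proof. by case: I => [|y I] //= -> ->. Qed.

Section Machine.

Variable k : nat.
Hypothesis k_gt0 : 0 < k.

Lemma move_cases t o t' : size (Ds t) = k -> move k t o = Some t' ->
 [\/ exists x r D B, [/\ o = 0, inp t = x :: r, Ds t = D :: B, push_dec_ok x D &
        t' = MState r ((x :: D) :: B) (Ist t) (out t)],
     exists A x r D B, [/\ o < k, Ds t = A ++ (x :: r) :: D :: B, push_dec_ok x D &
        t' = MState (inp t) (A ++ r :: (x :: D) :: B) (Ist t) (out t)],
     exists A x r, [/\ o = k, Dstack t k = x :: r, Ds t = rcons A (x :: r),
        push_inc_ok x (Ist t) & t' = MState (inp t) (rcons A r) (x :: Ist t) (out t)] |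
     exists x r, [/\ k < o, Ist t = x :: r &
        t' = MState (inp t) (Ds t) r (rcons (out t) x)]].
Proof.
rewrite /move /basic_move /Dstack => size_Ds.
have [le_ok | lt_ko] := leqP o k; last first.
  case: ifP => // _; case: (Ist t) => [|x r] //; case: ifP => // _ [<-].
  by apply: Or44; exists x, r.
case: o le_ok => [_ | i le_ik] /=.
  case: (Ds t) size_Ds => [|D B] /= size_Ds; first by move: k_gt0; rewrite -size_Ds.
  case: (inp t) => [|x r] //; case: ifP => // ok [<-].
  by apply: Or41; exists x, r, D, B.
set A := take i (Ds t).
have size_A : size A = i by rewrite size_take size_Ds le_ik.
have [lt_ik | ge_ik] := ltnP i.+1 k.
  set D := nth [::] (Ds t) i.+1; set B := drop i.+2 (Ds t).
  have def_Ds : Ds t = A ++ nth [::] (Ds t) i :: D :: B.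
    by rewrite -!drop_nth ?cat_take_drop // size_Ds // ltnW.
  case: (nth [::] (Ds t) i) def_Ds => [|x r] // def_Ds; case: ifP => // ok [<-].
  apply: Or42; exists A, x, r, D, B; split => //.
  rewrite def_Ds -size_A set_nth_splice -cat_rcons -(size_rcons A r) set_nth_splice.
  by rewrite cat_rcons.
have eq_ik : i.+1 = k by apply/eqP; rewrite eqn_leq le_ik.
rewrite -eq_ik eqxx /=.
have def_Ds : Ds t = rcons A (nth [::] (Ds t) i).
  rewrite -cats1 -(drop_oversize (n := i.+1) (s := Ds t)) ?size_Ds //.
  by rewrite -drop_nth ?cat_take_drop // size_Ds.
case E: (nth [::] (Ds t) i) def_Ds => [|x r] // def_Ds; case: ifP => // ok [<-].
apply: Or43; exists A, x, r; split => //.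
by rewrite def_Ds -cats1 -size_A set_nth_splice cats1.
Qed.

Definition pipeline (t : mstate) : seq nat := flatten (rev (Ds t)) ++ inp t.

Lemma pipeline_move t o t' : size (Ds t) = k -> all (sorted gtn) (Ds t) ->
  move k t o = Some t' ->
 [\/ [/\ o < k, Ist t' = Ist t, out t' = out t & exists u v x w,
        [/\ pipeline t = u ++ v ++ x :: w, pipeline t' = u ++ x :: v ++ w
          & {in v, forall y, y < x}]],
     exists x, [/\ head 0 (Dstack t k) = x, push_inc_ok x (Ist t),
        pipeline t = x :: pipeline t', Ist t' = x :: Ist t & out t' = out t] |
     [/\ k < o, pipeline t' = pipeline t, out t' = rcons (out t) (head 0 (Ist t))
        & Ist t = head 0 (Ist t) :: Ist t']].
Proof.
move=> size_Ds sorted_Ds /(move_cases size_Ds)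
  [[x [r [D [B [-> inp_t Ds_t ok ->]]]]] | [A [x [r [D [B [lt_ok Ds_t ok ->]]]]]]
  | [A [x [r [_ Dk Ds_t ok ->]]]] | [x [r [lt_ko Ist_t ->]]]].
- apply: Or31; split => //; exists (flatten (rev B)), D, x, r.
  rewrite /pipeline /= inp_t Ds_t !rev_cons !flatten_rcons -!catA; split => //.
  by apply: push_dec_ok_gt ok; move: sorted_Ds; rewrite Ds_t => /andP[].
- apply: Or31; split => //.
  exists (flatten (rev B)), D, x, (r ++ flatten (rev A) ++ inp t).
  rewrite /pipeline /= Ds_t !flatten_rev_cat !rev_cons !flatten_rcons -!catA; split => //.
  by apply: push_dec_ok_gt ok; move: sorted_Ds; rewrite Ds_t all_cat /= => /and4P[].
- apply: Or32; exists x; rewrite Dk; split => //.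
  by rewrite /pipeline /= Ds_t !rev_rcons.
- by apply: Or33; rewrite Ist_t.
Qed.

Lemma stacks_move t o t' : size (Ds t) = k -> all (sorted gtn) (Ds t) ->
  move k t o = Some t' ->
  [/\ size (Ds t') = k, all (sorted gtn) (Ds t') & suffix (inp t') (inp t)].
Proof.
move=> size_Ds sorted_Ds /(move_cases size_Ds)
  [[x [r [D [B [_ inp_t Ds_t ok ->]]]]] | [A [x [r [D [B [_ Ds_t ok ->]]]]]]
  | [A [x [r [_ _ Ds_t _ ->]]]] | [x [r [_ _ ->]]]] //=;
  rewrite -?size_Ds ?Ds_t ?suffix_refl; move: sorted_Ds; rewrite ?Ds_t.
- rewrite inp_t => /andP[sorted_D sorted_B]; split; [by [] | | exact: suffix_cons].
  by apply/andP; split; first exact: sorted_push_dec.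
- rewrite !size_cat !all_cat /= => /and4P[-> /path_sorted -> sorted_D ->]; split => //.
  by apply/and4P; split => //; exact: sorted_push_dec.
- by rewrite !size_rcons !all_rcons /= => /andP[/path_sorted -> ->].
- by [].
Qed.

Definition machine_inv (pi : seq nat) (t : mstate) :=
  [/\ size (Ds t) = k, all (sorted gtn) (Ds t), sorted ltn (Ist t),
      perm_eq (pipeline t ++ Ist t ++ out t) pi & suffix (inp t) pi].

Lemma machine_inv_init pi : machine_inv pi (init_state k pi).
Proof.
rewrite /machine_inv /pipeline /= size_nseq rev_nseq all_nseq orbT suffix_refl.
have flatten_nil n : flatten (nseq n ([::] : seq nat)) = [::] by elim: n.
by rewrite flatten_nil !cats0.
Qed.

Lemma machine_inv_move pi t o t' : machine_inv pi t -> move k t o = Some t' ->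
  machine_inv pi t'.
Proof.
case=> size_Ds sorted_Ds sorted_I perm_pi suffix_pi move_t.
have [size_Ds' sorted_Ds' suffix_inp] := stacks_move size_Ds sorted_Ds move_t.
have suffix_pi' := suffix_trans suffix_inp suffix_pi.
rewrite /machine_inv; case: (pipeline_move size_Ds sorted_Ds move_t) sorted_I perm_pi =>
  [[_ -> -> [u [v [x [w [-> -> _]]]]]] | [x [_ ok -> -> ->]] | [_ -> -> def_I]]
  sorted_I perm_pi; split => //; try apply: perm_trans perm_pi.
- by rewrite perm_cat2r perm_cat2l perm_sym perm_cat_cons.
- exact: sorted_push_inc.
- exact: perm_cat_cons.
- by move: sorted_I; rewrite def_I => /path_sorted.
- by rewrite def_I perm_cat2l -rcons_cat perm_rcons.
Qed.

Lemma run_ind (P : mstate -> Prop) t ops t' :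
  (forall u o u', P u -> move k u o = Some u' -> P u') ->
  P t -> run k t ops = Some t' -> P t'.
Proof.
move=> P_move; elim: ops t => [|o ops IH] t /=; first by move=> ? [<-].
by case E: (move k t o) => [u|] // Pt; apply: IH; apply: P_move E.
Qed.

Lemma run_cat t ops1 ops2 :
  run k t (ops1 ++ ops2) = if run k t ops1 is Some u then run k u ops2 else None.
Proof. by elim: ops1 t => [|o ops1 IH] t //=; case: (move k t o). Qed.

Definition blocked (a b c : nat) (t : mstate) := b \in Ist t /\ mem2 (pipeline t) c a.

Definition output_before (a b : nat) (t : mstate) :=
  exists p r, out t = p ++ b :: r /\ a \notin p.

Lemma pipeline_notin_out pi t x : uniq pi -> machine_inv pi t ->
  x \in pipeline t -> x \notin out t.
Proof.
move=> uniq_pi [_ _ _ perm_pi _] x_pipe.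
have := notin_uniq_cat (s2 := Ist t ++ out t) _ x_pipe.
by rewrite mem_cat negb_or (perm_uniq perm_pi) => /(_ uniq_pi)/andP[].
Qed.

Lemma blocked_push pi t t' a b c : machine_inv pi t -> b < c ->
  head 0 (Dstack t k) = b -> mem2 (pipeline t) c a -> move k t k = Some t' ->
  blocked a b c t'.
Proof.
move=> [size_Ds sorted_Ds _ _ _] lt_bc top_b ca /(pipeline_move size_Ds sorted_Ds)
  [[/[!ltnn] //] | [x [top_x _ pipe_t I_t' _]] | [/[!ltnn] //]].
rewrite top_x in top_b; split; first by rewrite I_t' top_b mem_head.
by move: ca; rewrite pipe_t top_b mem2_cons ltn_eqF.
Qed.

Lemma output_before_move t o t' a b : size (Ds t) = k -> all (sorted gtn) (Ds t) ->
  output_before a b t -> move k t o = Some t' -> output_before a b t'.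
Proof.
move=> size_Ds sorted_Ds [p [r [out_t a'p]]]; rewrite /output_before.
case/(pipeline_move size_Ds sorted_Ds) => [[_ _ -> _] | [x [_ _ _ _ ->]] | [_ _ -> _]].
- by exists p, r.
- by exists p, r.
- by exists p, (rcons r (head 0 (Ist t))); rewrite out_t rcons_cat.
Qed.

Lemma blocked_move pi t o t' a b c : uniq pi -> a < b -> b < c -> machine_inv pi t ->
  blocked a b c t -> move k t o = Some t' -> blocked a b c t' \/ output_before a b t'.
Proof.
move=> uniq_pi lt_ab lt_bc inv_t [b_I ca]; have [size_Ds sorted_Ds sorted_I _ _] := inv_t.
rewrite /blocked /output_before; case/(pipeline_move size_Ds sorted_Ds) =>
  [[_ -> _ [u [v [x [w [pipe_t -> lt_vx]]]]]] | [x [_ ok pipe_t -> _]] | [_ pipe_t' -> def_I]].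
- left; split => //; apply: mem2_overtake (ltn_trans lt_ab lt_bc) lt_vx _.
  by rewrite -pipe_t.
- have lt_xc : x < c by apply: ltn_trans lt_bc; exact: push_inc_ok_lt sorted_I ok _ b_I.
  by left; split; [exact: mem_behead | move: ca; rewrite pipe_t mem2_cons ltn_eqF].
- have [eq_xb | ne_xb] := eqVneq (head 0 (Ist t)) b.
    right; exists (out t), [::]; rewrite -cats1 eq_xb; split => //.
    exact: pipeline_notin_out uniq_pi inv_t (mem2r ca).
  left; rewrite pipe_t'; split => //.
  by move: b_I; rewrite def_I inE eq_sym (negbTE ne_xb).
Qed.

Lemma blocked_run pi t ops t' a b c : uniq pi -> a < b -> b < c -> machine_inv pi t ->
  blocked a b c t -> run k t ops = Some t' -> blocked a b c t' \/ output_before a b t'.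
Proof.
move=> uniq_pi lt_ab lt_bc inv_t blocked_t run_t.
pose P u := machine_inv pi u /\ (blocked a b c u \/ output_before a b u).
suff [_ //] : P t'; apply: (run_ind (P := P)) run_t; last by split; [| left].
move=> u o u' [inv_u blocked_or_before_u] move_u.
split; first exact: machine_inv_move inv_u move_u.
have [size_Ds sorted_Ds _ _ _] := inv_u; case: blocked_or_before_u => [blocked_u | before_u].
  exact: blocked_move uniq_pi lt_ab lt_bc inv_u blocked_u move_u.
by right; exact: output_before_move size_Ds sorted_Ds before_u move_u.
Qed.

Lemma sorted_Dstack t j : all (sorted gtn) (Ds t) -> sorted gtn (Dstack t j).
Proof.
move=> /allP sorted_Ds; rewrite /Dstack.
case: (ltnP j.-1 (size (Ds t))) => [lt_j | ge_j]; first exact/sorted_Ds/mem_nth.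
by rewrite nth_default.
Qed.

Lemma pipeline_mem2 pi t a c : uniq pi -> machine_inv pi t -> a < c ->
  (exists j l, [/\ 1 <= l, l <= j, j <= k, c \in Dstack t j & a \in Dstack t l])
  \/ ((exists j, [/\ 1 <= j, j <= k & c \in Dstack t j]) /\ a \in inp t)
  \/ [/\ c \in inp t, a \in inp t & index c pi < index a pi] ->
  mem2 (pipeline t) c a.
Proof.
move=> uniq_pi [_ sorted_Ds _ _ /suffixP[p def_pi]] lt_ac; rewrite /pipeline mem2_cat.
case=> [[j [l [l_gt0 le_lj _ c_j a_l]]] | [[[j [_ _ c_j]] a_inp] | [c_inp a_inp lt_ca]]].
- apply/orP; left; apply/orP; left.
  move: le_lj; rewrite leq_eqVlt => /predU1P[eq_lj | lt_lj].
    apply: mem2_flatten_rev_nth; apply: mem2_sorted (sorted_Dstack j sorted_Ds) _ _ _ => //.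
    - exact: rev_trans ltn_trans.
    - by rewrite -eq_lj.
    - by rewrite /= -leqNgt ltnW.
  apply: mem2_flatten_rev_lt c_j a_l.
  by rewrite -!subn1 ltn_sub2r // (leq_ltn_trans l_gt0 lt_lj).
- by rewrite (mem_flatten_rev_nth c_j) a_inp !orbT.
- apply/orP; left; apply/orP; right; apply: mem2_index (a_inp) _.
  move: lt_ca uniq_pi; rewrite def_pi uniq_catC !index_cat => /[swap] uniq_pi.
  by rewrite !(negbTE (notin_uniq_cat uniq_pi _)) // ltn_add2l => /ltnW.
Qed.

End Machine.

Theorem mainTheorem2 (k : nat) (hk : 1 <= k) (pi : seq nat) (hpi : uniq pi)
  (a b c : nat) (ha : a \in pi) (hb : b \in pi) (hc : c \in pi)
  (hab : a < b) (hbc : b < c)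
  (ops1 ops2 : seq nat) (s : mstate)
  (hrun1 : run k (init_state k pi) ops1 = Some s)
  (hbtop : head 0 (Dstack s k) = b /\ Dstack s k != [::])
  (hcond : (exists j l, [/\ 1 <= l, l <= j, j <= k,
                           c \in Dstack s j & a \in Dstack s l])
        \/ ((exists j, [/\ 1 <= j, j <= k & c \in Dstack s j]) /\ a \in inp s)
        \/ [/\ c \in inp s, a \in inp s & index c pi < index a pi]) :
  forall s' : mstate, run k (init_state k pi) (ops1 ++ k :: ops2) = Some s' ->
    out s' <> sort leq pi.
Proof.
move=> s'; rewrite run_cat hrun1 /=; case move_s: (move k s k) => [s1|] // run_s1 out_s'.
have inv_s := run_ind (@machine_inv_move k hk pi) (machine_inv_init k pi) hrun1.
have ca_s := pipeline_mem2 hpi inv_s (ltn_trans hab hbc) hcond.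
have blocked_s1 := blocked_push hk inv_s hbc hbtop.1 ca_s move_s.
have inv_s1 := machine_inv_move hk inv_s move_s.
have inv_s' := run_ind (@machine_inv_move k hk pi) inv_s1 run_s1.
have a_out : a \in out s' by rewrite out_s' mem_sort.
have [[_ /mem2r a_pipe] | [p [r [out_p a'p]]]] :=
  blocked_run hk hpi hab hbc inv_s1 blocked_s1 run_s1.
  by move: a_out; rewrite (negbTE (pipeline_notin_out hpi inv_s' a_pipe)).
have : sorted leq (out s') by rewrite out_s' sort_sorted //; exact: leq_total.
move: a_out; rewrite out_p mem_cat (negbTE a'p) inE (ltn_eqF hab) /= => a_r.
by move/sorted_cat_cons_leq/(_ a_r); rewrite leqNgt hab.
Qed.
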